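(* Let $n\ge 2$ be an integer, $s=n^2$, $r=n(n-1)$, $m_1=\frac{(n-1)(n-2)}{2}$ and $m_2=\frac{n(n+1)}{2}$. Let $A\in\mathbb{R}^{s\times s}$ be the strictly lower triangular matrix of the optimal third-order method SSPERK$(n^2,3)$: for rows $1\le i\le m_2$, $a_{ij}=\frac1r$ for $j<i$; for rows $m_2<i\le n^2$, $a_{ij}=\frac1r$ for $j\le m_1$, $a_{ij}=\frac{1}{n(2n-1)}$ for $m_1<j\le m_2$, $a_{ij}=\frac1r$ for $m_2<j<i$; and $a_{ij}=0$ for $j\ge i$. Let $c=A\mathbf e$ and $\tilde b=\frac1{n^2}\mathbf e$. Then the explicit Runge--Kutta method $(A,\tilde b)$ has order two ($\tilde b^T\mathbf e=1$, $\tilde b^Tc=\frac12$), it is non-defective, i.e. it violates both third-order conditions: $\tilde b^Tc^2\neq\frac13$ and $\tilde b^T\big(\frac{c^2}{2}-Ac\big)\neq 0$, and its SSP coefficient is positive.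
   Context: An explicit $s$-stage Runge--Kutta method with strictly lower triangular coefficient matrix $A$ and weight vector $b$ is denoted $(A,b)$; $\mathbf e=(1,\dots,1)^T$, $c=A\mathbf e$, and powers of vectors such as $c^2$ are taken componentwise. SSP coefficient: with $K=\begin{pmatrix}A&0\\ b^T&0\end{pmatrix}\in\mathbb{R}^{(s+1)\times(s+1)}$, the SSP coefficient of $(A,b)$ is $\mathcal C(A,b)=\sup\{r\ge 0:\ (I+rK)^{-1}\text{ exists},\ K(I+rK)^{-1}\ge 0,\ rK(I+rK)^{-1}\mathbf e\le \mathbf e\}$, inequalities taken componentwise. *)

From HB Require Import structures.
From mathcomp Require Import all_boot all_order all_algebra.
Set Implicit Arguments. Unset Strict Implicit. Unset Printing Implicit Defensive.
Import Order.TTheory GRing.Theory Num.Theory.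
Local Open Scope ring_scope.

Definition ones (R : ringType) (s : nat) : 'cV[R]_s := const_mx 1.

Definition dotv (R : ringType) (s : nat) (u v : 'cV[R]_s) : R :=
  \sum_(i < s) u i 0 * v i 0.

Definition vsq (R : ringType) (s : nat) (v : 'cV[R]_s) : 'cV[R]_s :=
  map_mx (fun x => x ^+ 2) v.

Definition Kmat (R : ringType) (s : nat) (A : 'M[R]_s) (b : 'cV[R]_s)
  : 'M[R]_(s + 1) := block_mx A 0 b^T 0.

(* r belongs to the set whose supremum defines the SSP coefficient C(A,b) *)
Definition ssp_feasible (R : realFieldType) (s : nat) (A : 'M[R]_s)
  (b : 'cV[R]_s) (r : R) : Prop :=
  let K := Kmat A b in
  let M := 1%:M + r *: K in
  [/\ 0 <= r, M \in unitmx,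
      (forall i j, 0 <= (K *m invmx M) i j) &
      (forall i, ((r *: K) *m invmx M *m ones R (s + 1)) i 0 <= 1)].

(* C(A,b) > 0: since the feasible set lies in [0,oo), its supremum is
   positive iff it contains a positive element. *)
Definition ssp_coef_pos (R : realFieldType) (s : nat) (A : 'M[R]_s)
  (b : 'cV[R]_s) : Prop :=
  exists r : R, 0 < r /\ ssp_feasible A b r.

(* Butcher matrix of SSPERK(n^2,3); indices are 0-based: paper row i is i+1. *)
Definition ssperk_A (R : fieldType) (n : nat) : 'M[R]_(n ^ 2) :=
  let r := (n * (n - 1))%N in
  let m1 := ((n - 1) * (n - 2) %/ 2)%N in
  let m2 := (n * (n + 1) %/ 2)%N in
  \matrix_(i, j)
    if (j < i)%N then
      if (i < m2)%N then (r%:R)^-1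
      else if (j < m1)%N then (r%:R)^-1
      else if (j < m2)%N then ((n * (2 * n - 1))%N%:R)^-1
      else (r%:R)^-1
    else 0.

From HB Require Import structures.
From mathcomp Require Import all_boot all_order all_algebra.
From mathcomp Require Import ring zify.
Set Implicit Arguments. Unset Strict Implicit. Unset Printing Implicit Defensive.
Import Order.TTheory GRing.Theory Num.Theory.
Local Open Scope ring_scope.

(* With r = n(n-1), the abscissae are c_i = i/r on the first m2 stages and
   c_i = (i - n)/r on the others (0-based), so every order condition is a sum
   of a quadratic polynomial in i over two index ranges.  The third-order
   defect c_i^2/2 - (Ac)_i is even linear, (i - [m2 <= i] n^2)/(2r^2), whence
   b~^T (c^2/2 - Ac) = 1/(4 n^2 (n-1)); similarly
   b~^T c^2 = 1/3 - (n^2 - n - 4)/(12 n^2 (n-1)), and n(n-1) is never 4.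
   The SSP coefficient is positive for any explicit method whose coefficients
   below the diagonal of [K] all lie in [m, 1] for some m > 0. *)

Lemma unitmx_1_addZ_strictly_lower (R : comUnitRingType) N (t : R) (K : 'M[R]_N) :
  (forall i j : 'I_N, (i <= j)%N -> K i j = 0) -> 1%:M + t *: K \in unitmx.
Proof.
move=> K_upper0; rewrite unitmxE det_trig.
  by rewrite big1 ?unitr1 // => i _; rewrite !mxE eqxx K_upper0 // mulr0 addr0.
apply/is_trig_mxP => i j lt_ij; rewrite !mxE K_upper0 ?(ltnW lt_ij) //.
by rewrite -val_eqE (ltn_eqF lt_ij) mulr0 addr0.
Qed.

Section StrictlyLowerFixpoint.
Variables (R : realFieldType) (N : nat) (G : 'M[R]_N).
Hypotheses (G_upper0 : forall i j : 'I_N, (i <= j)%N -> G i j = 0)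
           (G_ge0 : forall i j, 0 <= G i j).

(* Row [i] of [X = Y + G X] only involves the rows of [X] above [i]. *)
Lemma strictly_lower_fixpoint_ge0 p (X Y : 'M[R]_(N, p)) :
  (forall i j, 0 <= Y i j) -> X = Y + G *m X -> forall i j, 0 <= X i j.
Proof.
move=> Y_ge0 eqX.
suff X_ge0 k (i : 'I_N) : (i < k)%N -> forall j, 0 <= X i j by move=> i; apply: (X_ge0 i.+1).
elim: k i => [|k IHk] i // lt_ik j.
rewrite eqX !mxE addr_ge0 // sumr_ge0 // => l _.
have [lt_li | le_il] := ltnP l i; last by rewrite G_upper0 // mul0r.
by rewrite mulr_ge0 // IHk // (leq_trans lt_li).
Qed.

End StrictlyLowerFixpoint.

Section SSPCertificate.
Variables (R : realFieldType) (N : nat) (K : 'M[R]_N) (m : R).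
Hypotheses (N_gt0 : (0 < N)%N) (m_gt0 : 0 < m) (m_le1 : m <= 1)
  (K_upper0 : forall i j : 'I_N, (i <= j)%N -> K i j = 0)
  (K_lower_bounds : forall i j : 'I_N, (j < i)%N -> m <= K i j <= 1).

Let e : 'cV[R]_N := const_mx 1.
Let t := m / N%:R.
Let L : 'M[R]_N := \matrix_(i, j) if (j < i)%N then t else 0.
Let B := K - L *m K.
Let G := L - t *: B.
Let X := K *m invmx (1%:M + t *: K).

(* With [t = m / N] the rows of [L] sum to at most [m], so [L K <= m <= K]
   below the diagonal (i.e. [B >= 0]) and [e - L e >= 0]; the factorisation
   [(1 - L)(1 + tK) = 1 - G] turns [(1 + tK) X = K] into the triangular
   fixpoint equation [X = B + G X], and likewise for [e - t X e]. *)

Let K_lower_ge (i j : 'I_N) : (j < i)%N -> m <= K i j.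
Proof. by case/K_lower_bounds/andP. Qed.

Let K_le1 i j : K i j <= 1.
Proof. by have [/K_lower_bounds/andP[]|/K_upper0->] := ltnP j i. Qed.

Let K_ge0 i j : 0 <= K i j.
Proof. by have [/K_lower_ge/(le_trans (ltW m_gt0))|/K_upper0->] := ltnP j i. Qed.

Let t_gt0 : 0 < t.
Proof. by rewrite divr_gt0 // ltr0n. Qed.

Let sum_t : \sum_(k < N) t = m.
Proof. by rewrite sumr_const card_ord -mulr_natr divfK // pnatr_eq0 -lt0n. Qed.

Let L_ge0 i j : 0 <= L i j.
Proof. by rewrite mxE; case: ifP => // _; apply: ltW. Qed.

Let L_le_t i j : L i j <= t.
Proof. by rewrite mxE; case: ifP => // _; apply: ltW. Qed.

Let LK_ge0 i j : 0 <= (L *m K) i j.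
Proof. by rewrite mxE sumr_ge0 // => k _; rewrite mulr_ge0. Qed.

Let LK_le_m i j : (L *m K) i j <= m.
Proof.
rewrite mxE -sum_t ler_sum // => k _.
by rewrite -[t]mulr1 ler_pM.
Qed.

Let BE i j : B i j = K i j - (L *m K) i j.
Proof. by rewrite !mxE. Qed.

Let GE i j : G i j = L i j - t * B i j.
Proof. by rewrite !mxE. Qed.

Let B_upper0 (i j : 'I_N) : (i <= j)%N -> B i j = 0.
Proof.
move=> le_ij; rewrite BE K_upper0 // sub0r mxE big1 ?oppr0 // => k _.
rewrite mxE; case: ltnP => [lt_ki | _]; last by rewrite mul0r.
by rewrite K_upper0 ?mulr0 // ltnW // (leq_trans lt_ki).
Qed.

Let B_ge0 i j : 0 <= B i j.
Proof.
have [lt_ji | /B_upper0->//] := ltnP j i.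
by rewrite BE subr_ge0 (le_trans (LK_le_m i j)) ?K_lower_ge.
Qed.

Let B_le1 i j : B i j <= 1.
Proof. by rewrite BE (le_trans _ (K_le1 i j)) // lerBlDr lerDl LK_ge0. Qed.

Let G_upper0 (i j : 'I_N) : (i <= j)%N -> G i j = 0.
Proof. by move=> le_ij; rewrite GE B_upper0 // mxE ltnNge le_ij mulr0 subr0. Qed.

Let G_ge0 i j : 0 <= G i j.
Proof.
have [lt_ji | /G_upper0->//] := ltnP j i.
rewrite GE mxE lt_ji subr_ge0 -[X in _ <= X]mulr1.
by rewrite ler_pM // ltW.
Qed.

Let mulmx_1subL_1addK : (1%:M - L) *m (1%:M + t *: K) = 1%:M - G.
Proof.
rewrite mulmxDr mulmx1 -scalemxAr mulmxBl mul1mx /G /B.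
by rewrite opprB [RHS]addrA [RHS]addrAC.
Qed.

Let unit_1addK : 1%:M + t *: K \in unitmx.
Proof. exact: unitmx_1_addZ_strictly_lower. Qed.

Let X_fixpoint : X = B + G *m X.
Proof.
have commK : K *m (1%:M + t *: K) = (1%:M + t *: K) *m K.
  by rewrite mulmxDl mulmxDr mul1mx mulmx1 -scalemxAl -scalemxAr.
have MX : (1%:M + t *: K) *m X = K by rewrite /X mulmxA -commK mulmxK.
have: (1%:M - G) *m X = B.
  by rewrite -mulmx_1subL_1addK -mulmxA MX mulmxBl mul1mx.
by rewrite mulmxBl mul1mx => <-; rewrite subrK.
Qed.

Let ones_subXe_fixpoint :
  e - t *: (X *m e) = (e - L *m e) + G *m (e - t *: (X *m e)).
Proof.
have GX : G *m X = X - B by rewrite {2}X_fixpoint addrC addKr.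
rewrite mulmxBr -scalemxAr mulmxA GX mulmxBl /G mulmxBl -scalemxAl.
by rewrite scalerBr opprB !subrKA.
Qed.

Let e_subLe_ge0 i j : 0 <= (e - L *m e) i j.
Proof.
rewrite !mxE subr_ge0 (le_trans _ m_le1) // -sum_t ler_sum // => k _.
have -> : e k j = 1 by rewrite mxE.
by rewrite mulr1 L_le_t.
Qed.

Lemma ssp_radius_strictly_lower : exists2 r : R, 0 < r &
  [/\ 1%:M + r *: K \in unitmx,
      forall i j, 0 <= (K *m invmx (1%:M + r *: K)) i j &
      forall i, ((r *: K) *m invmx (1%:M + r *: K) *m e) i 0 <= 1].
Proof.
exists t => //; split => // [|i].
  exact (strictly_lower_fixpoint_ge0 G_upper0 G_ge0 B_ge0 X_fixpoint).
have := strictly_lower_fixpoint_ge0 G_upper0 G_ge0 e_subLe_ge0 ones_subXe_fixpoint i 0.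
by rewrite -scalemxAl -/X -scalemxAl !mxE subr_ge0.
Qed.

End SSPCertificate.

Lemma ssp_coef_pos_strictly_lower (R : realFieldType) s (A : 'M[R]_s)
    (b : 'cV[R]_s) (m : R) :
  0 < m -> m <= 1 ->
  (forall i j : 'I_s, (i <= j)%N -> A i j = 0) ->
  (forall i j : 'I_s, (j < i)%N -> m <= A i j <= 1) ->
  (forall j, m <= b j 0 <= 1) ->
  ssp_coef_pos A b.
Proof.
move=> m_gt0 m_le1 A_upper0 A_bounds b_bounds.
have K_upper0 (i j : 'I_(s + 1)) : (i <= j)%N -> Kmat A b i j = 0.
  rewrite /Kmat; case: (split_ordP i) => i' ->; case: (split_ordP j) => j' -> /=.
  - by rewrite block_mxEul; apply: A_upper0.
  - by rewrite block_mxEur mxE.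
  - by have := ltn_ord j'; lia.
  - by rewrite block_mxEdr mxE.
have K_bounds (i j : 'I_(s + 1)) : (j < i)%N -> m <= Kmat A b i j <= 1.
  rewrite /Kmat; case: (split_ordP i) => i' ->; case: (split_ordP j) => j' -> /=.
  - by rewrite block_mxEul; apply: A_bounds.
  - by have := ltn_ord i'; lia.
  - by rewrite block_mxEdl mxE ord1.
  - by rewrite !ord1 ltnn.
have N_gt0 : (0 < s + 1)%N by rewrite addn1.
have [r r_gt0 [M_unit P_ge0 rP_le1]] :=
  ssp_radius_strictly_lower N_gt0 m_gt0 m_le1 K_upper0 K_bounds.
by exists r; split => //; split => //; apply: ltW.
Qed.

Definition tri_num {R : numFieldType} (k : nat) : R := k%:R * (k%:R - 1) / 2.

Definition sqpyr_num {R : numFieldType} (k : nat) : R :=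
  k%:R * (k%:R - 1) * (2 * k%:R - 1) / 6.

Lemma sum_quadratic_nat (R : numFieldType) (f : nat -> R) (a b : nat) (p q w : R) : (a <= b)%N ->
  (forall j, (a <= j < b)%N -> f j = p * j%:R ^+ 2 + q * j%:R + w) ->
  \sum_(a <= j < b) f j =
  p * (sqpyr_num b - sqpyr_num a) + q * (tri_num b - tri_num a) + w * (b%:R - a%:R).
Proof.
move=> le_ab fE.
rewrite (@telescope_sumr_eq _ a b (fun k => p * sqpyr_num k + q * tri_num k + w * k%:R)) //.
  by ring.
by move=> j /fE->; rewrite /sqpyr_num /tri_num -addn1 natrD; field.
Qed.

Lemma invr_nat_bounds (R : numFieldType) (k l : nat) : (0 < k <= l)%N ->
  (l%:R : R)^-1 <= (k%:R : R)^-1 <= 1.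
Proof.
case/andP=> k_gt0 le_kl; have l_gt0 := leq_trans k_gt0 le_kl.
rewrite lef_pV2 ?posrE ?ltr0n // ler_nat le_kl /=.
by rewrite invf_le1 ?ltr0n // ler1n.
Qed.

Lemma dotv_scale_ones (R : nzRingType) k (a : R) (v : 'cV[R]_k) :
  dotv (a *: ones R k) v = a * \sum_(i < k) v i 0.
Proof. by rewrite /dotv mulr_sumr; apply: eq_bigr => i _; rewrite !mxE mulr1. Qed.

Lemma vsqE (R : nzRingType) k (v : 'cV[R]_k) i j : vsq v i j = v i j ^+ 2.
Proof. by rewrite mxE. Qed.

Lemma onesE (R : nzRingType) k (i : 'I_k) j : ones R k i j = 1.
Proof. by rewrite mxE. Qed.

Section SSPERK.
Variables (R : realFieldType) (n : nat).
Hypothesis n_ge2 : (2 <= n)%N.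

Local Notation s := (n ^ 2)%N.
Local Notation m1 := ((n - 1) * (n - 2) %/ 2)%N.
Local Notation m2 := (n * (n + 1) %/ 2)%N.
Local Notation rd := (n * (n - 1))%N.
Local Notation qd := (n * (2 * n - 1))%N.
Local Notation nR := (n%:R : R).
Local Notation A := (ssperk_A R n).
Local Notation e := (ones R s).
Local Notation c := (A *m e).
Local Notation bt := ((s%:R)^-1 *: e).

Lemma ssperk_m2_double : (m2 * 2 = n * (n + 1))%N.
Proof. by rewrite divnK // dvdn2 oddM addn1 /= andbN. Qed.

Lemma ssperk_m1_double : (m1 * 2 = (n - 1) * (n - 2))%N.
Proof.
rewrite divnK //; case: n n_ge2 => [|[|k]] // _.
by rewrite dvdn2 oddM !subSS !subn0 /= andNb.
Qed.

Lemma ssperk_m1_add : (m1 + (2 * n - 1) = m2)%N.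
Proof. by have := ssperk_m1_double; have := ssperk_m2_double; nia. Qed.

Lemma ssperk_m1_le_m2 : (m1 <= m2)%N.
Proof. by rewrite -ssperk_m1_add leq_addr. Qed.

Lemma ssperk_m2_le_s : (m2 <= s)%N.
Proof. by have := ssperk_m2_double; nia. Qed.

Let n_ge1 : (1 <= n)%N. Proof. exact: ltnW. Qed.

Let nR_neq0 : nR != 0.
Proof. by rewrite pnatr_eq0 -lt0n. Qed.

Let nR_sub1_neq0 : nR - 1 != 0.
Proof. by rewrite subr_eq0 pnatr_eq1 gtn_eqF. Qed.

Let nR_double_sub1_neq0 : 2 * nR - 1 != 0.
Proof. by rewrite subr_eq0 -natrM pnatr_eq1 gtn_eqF //; lia. Qed.

Let ssperk_denoms_neq0 := (nR_neq0, nR_sub1_neq0, nR_double_sub1_neq0).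

Let natr_rd : rd%:R = nR * (nR - 1) :> R.
Proof. by rewrite natrM natrB. Qed.

Let natr_qd : qd%:R = nR * (2 * nR - 1) :> R.
Proof. by rewrite natrM natrB ?natrM //; lia. Qed.

Let natr_m1 : m1%:R = (nR - 1) * (nR - 2) / 2 :> R.
Proof.
apply: (@mulIf _ 2); first by rewrite pnatr_eq0.
by rewrite -natrM ssperk_m1_double natrM !natrB //; field.
Qed.

Let natr_m2 : m2%:R = nR * (nR + 1) / 2 :> R.
Proof.
apply: (@mulIf _ 2); first by rewrite pnatr_eq0.
by rewrite -natrM ssperk_m2_double natrM natrD; field.
Qed.

Let natr_s : s%:R = nR ^+ 2 :> R.
Proof. by rewrite natrX. Qed.

Definition ssperk_coef (i j : nat) : R :=
  if (j < i)%N then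
    if (i < m2)%N then (rd%:R)^-1
    else if (j < m1)%N then (rd%:R)^-1
    else if (j < m2)%N then (qd%:R)^-1
    else (rd%:R)^-1
  else 0.

Lemma ssperk_AE (i j : 'I_s) : A i j = ssperk_coef i j.
Proof. by rewrite mxE. Qed.

Lemma ssperk_row_sum (g : nat -> R) (i : 'I_s) :
  \sum_(j < s) A i j * g j =
  if (i < m2)%N then (rd%:R)^-1 * \sum_(0 <= j < i) g j
  else (rd%:R)^-1 * \sum_(0 <= j < m1) g j + (qd%:R)^-1 * \sum_(m1 <= j < m2) g j
       + (rd%:R)^-1 * \sum_(m2 <= j < i) g j.
Proof.
under eq_bigr do rewrite ssperk_AE.
rewrite -(big_mkord xpredT (fun j => ssperk_coef i j * g j)).
have upper0 : \sum_(i <= j < s) ssperk_coef i j * g j = 0.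
  rewrite big_nat_cond big1 // => j /andP[/andP[le_ij _] _].
  by rewrite /ssperk_coef ltnNge le_ij mul0r.
rewrite (big_cat_nat (leq0n i) (ltnW (ltn_ord i))) /= upper0 addr0.
have [lt_im2 | le_m2i] := ltnP i m2.
  by rewrite mulr_sumr; apply: eq_big_nat => j /andP[_ lt_ji]; rewrite /ssperk_coef lt_ji lt_im2.
have le_m1i := leq_trans ssperk_m1_le_m2 le_m2i.
rewrite (big_cat_nat (leq0n m1) le_m1i) /=.
rewrite (big_cat_nat ssperk_m1_le_m2 le_m2i) /= !mulr_sumr -!addrA; congr (_ + (_ + _)).
- apply: eq_big_nat => j /andP[_ lt_jm1].
  by rewrite /ssperk_coef (leq_trans lt_jm1 le_m1i) ltnNge le_m2i lt_jm1.
- apply: eq_big_nat => j /andP[le_m1j lt_jm2].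
  by rewrite /ssperk_coef (leq_trans lt_jm2 le_m2i) ltnNge le_m2i ltnNge le_m1j lt_jm2.
- apply: eq_big_nat => j /andP[le_m2j lt_ji].
  have le_m1j := leq_trans ssperk_m1_le_m2 le_m2j.
  by rewrite /ssperk_coef lt_ji ltnNge le_m2i ltnNge le_m1j ltnNge le_m2j.
Qed.

Definition ssperk_c (i : nat) : R :=
  if (i < m2)%N then i%:R / rd%:R else (i%:R - nR) / rd%:R.

Lemma ssperk_cE (i : 'I_s) : c i 0 = ssperk_c i.
Proof.
rewrite mxE; under eq_bigr do rewrite onesE.
rewrite (ssperk_row_sum (fun _ => 1)).
rewrite /ssperk_c !sumr_const_nat !subn0; case: ltnP => [_ | le_m2i].
  by rewrite mulrC.
rewrite !natrB // ?ssperk_m1_le_m2 // natr_rd natr_qd natr_m1 natr_m2.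
by field; rewrite ?ssperk_denoms_neq0.
Qed.

Lemma sum_ssperk_c_lo a b : (a <= b)%N -> (b <= m2)%N ->
  \sum_(a <= j < b) ssperk_c j = (tri_num b - tri_num a) / rd%:R.
Proof.
move=> le_ab le_bm2.
rewrite (sum_quadratic_nat (p := 0) (q := (rd%:R)^-1) (w := 0)) //; first by ring.
move=> j /andP[_ lt_jb]; rewrite /ssperk_c (leq_trans lt_jb le_bm2).
by rewrite mul0r add0r addr0 mulrC.
Qed.

Lemma sum_ssperk_c_hi a b : (m2 <= a)%N -> (a <= b)%N ->
  \sum_(a <= j < b) ssperk_c j =
  (tri_num b - tri_num a - nR * (b%:R - a%:R)) / rd%:R.
Proof.
move=> le_m2a le_ab.
rewrite (sum_quadratic_nat (p := 0) (q := (rd%:R)^-1) (w := - nR / rd%:R)) //; first by ring.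
move=> j /andP[le_aj _]; rewrite /ssperk_c ltnNge (leq_trans le_m2a le_aj) /=.
by ring.
Qed.

Lemma ssperk_defectE (i : 'I_s) :
  2^-1 * c i 0 ^+ 2 - (A *m c) i 0 =
  (i%:R - (if (i < m2)%N then 0 else s%:R)) / (2 * rd%:R ^+ 2).
Proof.
rewrite ssperk_cE mxE; under eq_bigr do rewrite ssperk_cE.
rewrite ssperk_row_sum; case: ltnP => [lt_im2 | le_m2i].
  rewrite (sum_ssperk_c_lo (leq0n i) (ltnW lt_im2)) /ssperk_c lt_im2 /tri_num.
  by rewrite natr_rd; field; rewrite ?ssperk_denoms_neq0.
rewrite (sum_ssperk_c_lo (leq0n m1) ssperk_m1_le_m2).
rewrite (sum_ssperk_c_lo ssperk_m1_le_m2 (leqnn m2)) (sum_ssperk_c_hi (leqnn m2) le_m2i).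
rewrite /ssperk_c ltnNge le_m2i /= /tri_num natr_rd natr_qd natr_m1 natr_m2 natr_s.
by field; rewrite ?ssperk_denoms_neq0.
Qed.

Lemma sum_ord_split_m2 (F : nat -> R) :
  \sum_(i < s) F i = \sum_(0 <= i < m2) F i + \sum_(m2 <= i < s) F i.
Proof. by rewrite -(big_mkord xpredT F) (big_cat_nat (leq0n m2) ssperk_m2_le_s). Qed.

Lemma ssperk_b_e : dotv bt e = 1.
Proof.
rewrite dotv_scale_ones; under eq_bigr do rewrite onesE.
by rewrite sumr_const card_ord mulVf // natr_s expf_neq0.
Qed.

Lemma ssperk_b_c : dotv bt c = 2^-1.
Proof.
rewrite dotv_scale_ones; under eq_bigr do rewrite ssperk_cE.
rewrite sum_ord_split_m2 (sum_ssperk_c_lo (leq0n m2) (leqnn m2)).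
rewrite (sum_ssperk_c_hi (leqnn m2) ssperk_m2_le_s) /tri_num natr_s natr_rd natr_m2.
by field; rewrite ?ssperk_denoms_neq0.
Qed.

Lemma ssperk_b_c2 :
  dotv bt (vsq c) = 3^-1 - (nR ^+ 2 - nR - 4) / (12 * nR ^+ 2 * (nR - 1)).
Proof.
rewrite dotv_scale_ones; under eq_bigr do rewrite vsqE ssperk_cE.
rewrite (sum_ord_split_m2 (fun i => ssperk_c i ^+ 2)).
rewrite (sum_quadratic_nat (p := (rd%:R ^+ 2)^-1) (q := 0) (w := 0) (leq0n m2)); last first.
  move=> j /andP[_ lt_jm2]; rewrite /ssperk_c lt_jm2 natr_rd.
  by field; rewrite ?ssperk_denoms_neq0.
rewrite (sum_quadratic_nat (p := (rd%:R ^+ 2)^-1) (q := - 2 * nR / rd%:R ^+ 2)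
  (w := nR ^+ 2 / rd%:R ^+ 2) ssperk_m2_le_s); last first.
  move=> j /andP[le_m2j _]; rewrite /ssperk_c ltnNge le_m2j /= natr_rd.
  by field; rewrite ?ssperk_denoms_neq0.
rewrite /tri_num /sqpyr_num natr_s natr_rd natr_m2.
by field; rewrite ?ssperk_denoms_neq0.
Qed.

Lemma ssperk_b_defect :
  dotv bt (2^-1 *: vsq c - A *m c) = (4 * nR ^+ 2 * (nR - 1))^-1.
Proof.
have defectE i : (2^-1 *: vsq c - A *m c) i 0 = 2^-1 * c i 0 ^+ 2 - (A *m c) i 0.
  by rewrite !mxE.
rewrite dotv_scale_ones; under eq_bigr do rewrite defectE ssperk_defectE.
rewrite (sum_ord_split_m2 (fun i => (i%:R - (if (i < m2)%N then 0 else s%:R)) / (2 * rd%:R ^+ 2))).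
rewrite (sum_quadratic_nat (p := 0) (q := (2 * rd%:R ^+ 2)^-1) (w := 0) (leq0n m2)); last first.
  move=> j /andP[_ lt_jm2]; rewrite lt_jm2 natr_rd.
  by field; rewrite ?ssperk_denoms_neq0.
rewrite (sum_quadratic_nat (p := 0) (q := (2 * rd%:R ^+ 2)^-1)
  (w := - s%:R / (2 * rd%:R ^+ 2)) ssperk_m2_le_s); last first.
  move=> j /andP[le_m2j _]; rewrite ltnNge le_m2j /= natr_rd.
  by field; rewrite ?ssperk_denoms_neq0.
rewrite /tri_num natr_s natr_rd natr_m2.
by field; rewrite ?ssperk_denoms_neq0.
Qed.

Lemma ssperk_b_c2_neq : dotv bt (vsq c) != 3^-1.
Proof.
have rd_neq4 : rd != 4%N.
  by case: n n_ge2 => [|[|[|k]]] // _; rewrite gtn_eqF //; nia.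
rewrite ssperk_b_c2 -subr_eq0 addrAC subrr add0r oppr_eq0 mulf_neq0 //.
  by rewrite (_ : _ - 4 = rd%:R - 4%:R) ?subr_eq0 ?eqr_nat // natr_rd; ring.
by rewrite invr_eq0; rewrite !mulf_neq0; rewrite ?ssperk_denoms_neq0 ?pnatr_eq0.
Qed.

Lemma ssperk_b_defect_neq0 : dotv bt (2^-1 *: vsq c - A *m c) != 0.
Proof.
by rewrite ssperk_b_defect invr_eq0; rewrite !mulf_neq0; rewrite ?ssperk_denoms_neq0 ?pnatr_eq0.
Qed.

Lemma ssperk_A_upper0 (i j : 'I_s) : (i <= j)%N -> A i j = 0.
Proof. by move=> le_ij; rewrite ssperk_AE /ssperk_coef ltnNge le_ij. Qed.

Lemma ssperk_A_bounds (i j : 'I_s) : (j < i)%N -> ((2 * s)%:R)^-1 <= A i j <= 1.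
Proof.
move=> lt_ji; rewrite ssperk_AE /ssperk_coef lt_ji.
have rd_bounds : (0 < rd <= 2 * s)%N by apply/andP; split; nia.
have qd_bounds : (0 < qd <= 2 * s)%N by apply/andP; split; nia.
by do ![case: ifP => _]; apply: invr_nat_bounds.
Qed.

Lemma ssperk_ssp_coef_pos : ssp_coef_pos A bt.
Proof.
have s_bounds : (0 < s <= 2 * s)%N by apply/andP; split; nia.
apply: (ssp_coef_pos_strictly_lower (m := ((2 * s)%:R)^-1)).
- by rewrite invr_gt0 ltr0n; nia.
- by rewrite invf_le1 ?ltr0n ?ler1n; nia.
- exact: ssperk_A_upper0.
- exact: ssperk_A_bounds.
- by move=> j; rewrite mxE onesE mulr1 invr_nat_bounds.
Qed.

End SSPERK.

Theorem mainTheorem2 (R : realFieldType) (n : nat) (hn : (2 <= n)%N) :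
  let A := ssperk_A R n in
  let e := ones R (n ^ 2) in
  let c := A *m e in
  let bt := ((n ^ 2)%N%:R)^-1 *: e in
  [/\ dotv bt e = 1,
      dotv bt c = 2^-1,
      dotv bt (vsq c) != 3^-1,
      dotv bt (2^-1 *: vsq c - A *m c) != 0 &
      ssp_coef_pos A bt].
Proof.
move=> A e c bt; split.
- exact: ssperk_b_e.
- exact: ssperk_b_c.
- exact: ssperk_b_c2_neq.
- exact: ssperk_b_defect_neq0.
- exact: ssperk_ssp_coef_pos.
Qed.
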